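(* Let $\mathfrak{n}$ be the real $7$-dimensional Lie algebra with basis $e_1,\dots,e_7$ whose nonzero brackets (up to antisymmetry) are $[e_1,e_2]=e_3$, $[e_1,e_3]=e_4$, $[e_1,e_4]=e_6$, $[e_1,e_6]=e_7$, $[e_2,e_3]=e_5$, $[e_2,e_5]=e_6$, $[e_2,e_6]=e_7$, $[e_3,e_4]=-e_7$, $[e_3,e_5]=e_7$. Then $\mathfrak{n}$ is an Einstein nilradical.
   Context: A real nilpotent Lie algebra $\mathfrak{n}$ is called an Einstein nilradical if it admits an inner product such that the left-invariant Riemannian metric it defines on the simply connected nilpotent Lie group with Lie algebra $\mathfrak{n}$ is a nilsoliton, i.e. its Ricci operator satisfies $\mathrm{Ric}=c\,\mathrm{Id}+D$ for some $c\in\mathbb{R}$ and some derivation $D$ of $\mathfrak{n}$. Brackets of basis elements not listed are zero. *)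

From HB Require Import structures.
From mathcomp Require Import all_boot all_order all_algebra.
From mathcomp Require Import reals.
Set Implicit Arguments. Unset Strict Implicit. Unset Printing Implicit Defensive.
Import Order.TTheory GRing.Theory Num.Theory.
Local Open Scope ring_scope.

(* Vectors of the n-dimensional real vector space are row vectors 'rV[R]_n;
   the standard basis vector e_(i+1) of the paper is [delta_mx 0 i].
   Linear endomorphisms are matrices acting on the right: x |-> x *m D. *)

Definition ebasis (R : realType) (n : nat) (i : 'I_n) : 'rV[R]_n := delta_mx 0 i.

Definition bracket_of_consts (R : realType) (n : nat)
  (C : 'I_n -> 'I_n -> 'rV[R]_n) (u v : 'rV[R]_n) : 'rV[R]_n :=
  \sum_(i < n) \sum_(j < n) (u 0 i * v 0 j) *: C i j.

Definition is_derivation (R : realType) (n : nat)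
  (br : 'rV[R]_n -> 'rV[R]_n -> 'rV[R]_n) (D : 'M[R]_n) : Prop :=
  forall x y : 'rV[R]_n, br x y *m D = br (x *m D) y + br x (y *m D).

(* Inner products on R^n are parametrized by an invertible matrix P: the
   inner product <.,.>_P is the one for which the rows of P form an
   orthonormal basis.  Every inner product arises this way. *)
Definition ip_of (R : realType) (n : nat) (P : 'M[R]_n) (x y : 'rV[R]_n) : R :=
  ((x *m invmx P) *m (y *m invmx P)^T) 0 0.

(* Ricci form of the left-invariant metric on the simply connected nilpotent
   Lie group with Lie algebra (R^n, br) and inner product <.,.>_P, given by the
   standard formula for nilpotent Lie algebras, with f_i = row i P an
   orthonormal basis:
     ric(x,y) = -1/2 sum_{i,j} <[x,f_i],f_j><[y,f_i],f_j>
                + 1/4 sum_{i,j} <[f_i,f_j],x><[f_i,f_j],y>. *)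
Definition ricci_form (R : realType) (n : nat)
  (br : 'rV[R]_n -> 'rV[R]_n -> 'rV[R]_n) (P : 'M[R]_n) (x y : 'rV[R]_n) : R :=
  let f := fun i : 'I_n => row i P in
  let ip := ip_of P in
  - (1/2) * (\sum_(i < n) \sum_(j < n) ip (br x (f i)) (f j) * ip (br y (f i)) (f j))
  + (1/4) * (\sum_(i < n) \sum_(j < n) ip (br (f i) (f j)) x * ip (br (f i) (f j)) y).

Definition ricci_op (R : realType) (n : nat)
  (br : 'rV[R]_n -> 'rV[R]_n -> 'rV[R]_n) (P : 'M[R]_n) (x : 'rV[R]_n) : 'rV[R]_n :=
  \sum_(k < n) ricci_form br P x (row k P) *: row k P.

Definition is_nilsoliton (R : realType) (n : nat)
  (br : 'rV[R]_n -> 'rV[R]_n -> 'rV[R]_n) (P : 'M[R]_n) : Prop :=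
  P \in unitmx /\
  exists (c : R) (D : 'M[R]_n), is_derivation br D /\
    forall x : 'rV[R]_n, ricci_op br P x = c *: x + x *m D.

Definition einstein_nilradical (R : realType) (n : nat)
  (br : 'rV[R]_n -> 'rV[R]_n -> 'rV[R]_n) : Prop :=
  exists P : 'M[R]_n, is_nilsoliton br P.

(* The 7-dimensional algebra of the statement, 0-based indices
   (paper's e_k is ebasis (k-1)).  Brackets [e_i,e_j] for i<j: *)
Definition n7_upper (R : realType) (i j : nat) : 'rV[R]_7 :=
  match i, j with
  | 0, 1 => ebasis R (inord 2)
  | 0, 2 => ebasis R (inord 3)
  | 0, 3 => ebasis R (inord 5)
  | 0, 5 => ebasis R (inord 6)
  | 1, 2 => ebasis R (inord 4)
  | 1, 4 => ebasis R (inord 5)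
  | 1, 5 => ebasis R (inord 6)
  | 2, 3 => - ebasis R (inord 6)
  | 2, 4 => ebasis R (inord 6)
  | _, _ => 0
  end.

Definition n7_consts (R : realType) (i j : 'I_7) : 'rV[R]_7 :=
  if (i < j)%N then n7_upper R i j
  else if (j < i)%N then - n7_upper R j i
  else 0.

Definition n7_bracket (R : realType) : 'rV[R]_7 -> 'rV[R]_7 -> 'rV[R]_7 :=
  bracket_of_consts (n7_consts R).
Arguments n7_bracket R : clear implicits.

(* In the basis f1 = e1 + e2, f2 = e1 - e2, f3 = e3, f4 = e4 + e5, f5 = e4 - e5,
   f6 = e6, f7 = e7 the algebra has a nice basis: every [f_a, f_b] is a multiple of
   a single f_k, and two distinct f_a, f_b never contribute to the same bracket
   coordinate.  Hence for the inner product making the rescaled vectors t_a f_a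
   orthonormal, the Ricci operator is diagonal in the f_a.  The weights
   t_a^2 = 1, 2, 2, 13/10, 13/20, 13/10, 169/150 give Ric = -10 Id + 38/13 D with
   D = diag(1, 1, 2, 3, 3, 4, 5) in the basis f_a, and D is a derivation because
   [f_a, f_b] lies in R f_k only when d_k = d_a + d_b. *)

From HB Require Import structures.
From mathcomp Require Import all_boot all_order all_algebra.
From mathcomp Require Import reals.
From mathcomp Require Import ring lra.
Set Implicit Arguments. Unset Strict Implicit. Unset Printing Implicit Defensive.
Import Order.TTheory GRing.Theory Num.Theory.
Local Open Scope ring_scope.

Definition is_structure_consts (R : realType) (n : nat) (C : 'I_n -> 'I_n -> 'rV[R]_n)
    (P : 'M[R]_n) (cc : 'I_n -> 'I_n -> 'I_n -> R) : Prop :=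
  forall a b, bracket_of_consts C (row a P) (row b P) = \sum_k cc a b k *: row k P.

Definition ricci_consts (R : realType) (n : nat) (cc : 'I_n -> 'I_n -> 'I_n -> R)
    (a b : 'I_n) : R :=
  - (1/2) * (\sum_i \sum_j cc a i j * cc b i j)
  + (1/4) * (\sum_i \sum_j cc i j a * cc i j b).

Definition is_diag_derivation (R : realType) (n : nat)
    (cc : 'I_n -> 'I_n -> 'I_n -> R) (d : 'I_n -> R) : Prop :=
  forall a b k, cc a b k != 0 -> d k = d a + d b.

Lemma sum_mul_delta (R : realType) n (F : 'I_n -> R) (j : 'I_n) :
  \sum_k F k * (delta_mx 0 j : 'rV[R]_n) 0 k = F j.
Proof.
rewrite (bigD1 j) //= mxE !eqxx mulr1 big1 ?addr0 // => i ne.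
by rewrite mxE eqxx /= (negbTE ne) mulr0.
Qed.

Lemma sum_delta_mul (R : realType) n (F : 'I_n -> R) (j : 'I_n) :
  \sum_k (delta_mx 0 j : 'rV[R]_n) 0 k * F k = F j.
Proof. by under eq_bigr do rewrite mulrC; rewrite sum_mul_delta. Qed.

Lemma sum2_suml_mul (R : comPzRingType) n (X : 'I_n -> R)
    (F : 'I_n -> 'I_n -> 'I_n -> R) (G : 'I_n -> 'I_n -> R) :
  \sum_i \sum_j (\sum_a X a * F a i j) * G i j
  = \sum_a X a * \sum_i \sum_j F a i j * G i j.
Proof.
under eq_bigr do under eq_bigr do rewrite big_distrl.
under eq_bigr do rewrite exchange_big /=.
rewrite exchange_big; apply: eq_bigr => a _.
rewrite big_distrr; apply: eq_bigr => i _.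
by rewrite big_distrr; apply: eq_bigr => j _ /=; rewrite mulrA.
Qed.

Lemma sum2_sumr_mul (R : comPzRingType) n (X : 'I_n -> R)
    (F : 'I_n -> 'I_n -> 'I_n -> R) (G : 'I_n -> 'I_n -> R) :
  \sum_i \sum_j (\sum_a F i j a * X a) * G i j
  = \sum_a X a * \sum_i \sum_j F i j a * G i j.
Proof.
under eq_bigr do under eq_bigr do under eq_bigr do rewrite mulrC.
exact: sum2_suml_mul.
Qed.

Lemma bracket_of_constsZ (R : realType) n (C : 'I_n -> 'I_n -> 'rV[R]_n) s r u v :
  bracket_of_consts C (s *: u) (r *: v) = (s * r) *: bracket_of_consts C u v.
Proof.
rewrite /bracket_of_consts scaler_sumr; apply: eq_bigr => i _.
rewrite scaler_sumr; apply: eq_bigr => j _.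
by rewrite scalerA !mxE; congr (_ *: _); ring.
Qed.

Lemma bracket_of_consts_mulmx (R : realType) n (C : 'I_n -> 'I_n -> 'rV[R]_n)
    (P : 'M[R]_n) (u v : 'rV[R]_n) :
  bracket_of_consts C (u *m P) (v *m P) =
  \sum_a \sum_b (u 0 a * v 0 b) *: bracket_of_consts C (row a P) (row b P).
Proof.
rewrite /bracket_of_consts; symmetry.
under eq_bigr => a _ do under eq_bigr => b _ do
  (rewrite scaler_sumr; under eq_bigr => i _ do rewrite scaler_sumr).
under eq_bigr => a _ do rewrite exchange_big /=.
rewrite exchange_big /=; apply: eq_bigr => i _.
under eq_bigr => a _ do rewrite exchange_big /=.
rewrite exchange_big /=; apply: eq_bigr => j _.
under eq_bigr => a _ do under eq_bigr => b _ do rewrite scalerA.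
under eq_bigr => a _ do rewrite -scaler_suml.
rewrite -scaler_suml; congr (_ *: _).
rewrite !mxE big_distrl /=; apply: eq_bigr => a _.
by rewrite big_distrr /=; apply: eq_bigr => b _; rewrite !mxE; ring.
Qed.

Section NilsolitonCriterion.
Variables (R : realType) (n : nat) (C : 'I_n -> 'I_n -> 'rV[R]_n).
Variables (P : 'M[R]_n) (cc : 'I_n -> 'I_n -> 'I_n -> R).
Hypotheses (P_unit : P \in unitmx) (P_consts : is_structure_consts C P cc).

Local Notation br := (bracket_of_consts C).
Local Notation coord x := (x *m invmx P).

Lemma row_mul_invmx k : row k P *m invmx P = delta_mx 0 k.
Proof. by rewrite -row_mul mulmxV // row1. Qed.

Lemma coord_bracket_row a b : br (row a P) (row b P) *m invmx P = \row_k cc a b k.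
Proof.
rewrite P_consts mulmx_suml [RHS]row_sum_delta; apply: eq_bigr => k _.
by rewrite -scalemxAl row_mul_invmx mxE.
Qed.

Lemma coord_bracket u v k :
  (br u v *m invmx P) 0 k = \sum_a \sum_b (coord u) 0 a * (coord v) 0 b * cc a b k.
Proof.
have -> : br u v = br (coord u *m P) (coord v *m P) by rewrite !mulmxKV.
rewrite bracket_of_consts_mulmx mulmx_suml summxE; apply: eq_bigr => a _.
rewrite mulmx_suml summxE; apply: eq_bigr => b _.
by rewrite -scalemxAl coord_bracket_row !mxE.
Qed.

Lemma ip_of_coord x y : ip_of P x y = \sum_l (coord x) 0 l * (coord y) 0 l.
Proof. by rewrite /ip_of mxE; apply: eq_bigr => l _; rewrite [_^T _ _]mxE. Qed.

Lemma ricci_form_row x k :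
  ricci_form br P x (row k P) = \sum_a (coord x) 0 a * ricci_consts cc a k.
Proof.
have ip_bracket_row y i j :
    ip_of P (br y (row i P)) (row j P) = \sum_a (coord y) 0 a * cc a i j.
  rewrite ip_of_coord row_mul_invmx sum_mul_delta coord_bracket.
  apply: eq_bigr => a _; rewrite row_mul_invmx.
  by under eq_bigr do rewrite -mulrA; rewrite -big_distrr sum_delta_mul.
have ip_row_bracket y i j :
    ip_of P (br (row i P) (row j P)) y = \sum_l cc i j l * (coord y) 0 l.
  by rewrite ip_of_coord coord_bracket_row; apply: eq_bigr => l _; rewrite mxE.
rewrite /ricci_form /=.
under eq_bigr do under eq_bigr do rewrite !ip_bracket_row row_mul_invmx sum_delta_mul.
under [in X in _ + X]eq_bigr do under eq_bigr do
  rewrite !ip_row_bracket row_mul_invmx sum_mul_delta.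
rewrite sum2_suml_mul sum2_sumr_mul /ricci_consts.
under [RHS]eq_bigr do rewrite mulrDr.
by rewrite big_split /= !mulr_sumr; congr (_ + _); apply: eq_bigr => a _; ring.
Qed.

Lemma ricci_op_coord x :
  ricci_op br P x = (coord x *m \matrix_(a, b) ricci_consts cc a b) *m P.
Proof.
rewrite /ricci_op [RHS]mulmx_sum_row; apply: eq_bigr => k _.
rewrite ricci_form_row; congr (_ *: _); rewrite [RHS]mxE.
by apply: eq_bigr => a _; rewrite [(\matrix_(_, _) _) _ _]mxE.
Qed.

Lemma is_derivation_diag (d : 'I_n -> R) :
  is_diag_derivation cc d ->
  is_derivation br (invmx P *m diag_mx (\row_i d i) *m P).
Proof.
move=> d_der x y; set D := diag_mx _.
have coordD w : w *m (invmx P *m D *m P) *m invmx P = coord w *m D.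
  by rewrite !mulmxA mulmxK.
have coord_diag w a : (coord w *m D) 0 a = (coord w) 0 a * d a.
  by rewrite mul_mx_diag !mxE.
apply: (can_inj (mulmxKV P_unit)); rewrite mulmxDl coordD; apply/rowP => k.
rewrite coord_diag [RHS]mxE !coord_bracket big_distrl -big_split.
apply: eq_bigr => a _; rewrite big_distrl -big_split; apply: eq_bigr => b _ /=.
rewrite !coordD !coord_diag.
have [->|/d_der ->] := eqVneq (cc a b k) 0; first by rewrite !mulr0 mul0r addr0.
ring.
Qed.

Lemma is_nilsoliton_diag (c : R) (d : 'I_n -> R) :
  (forall a b, ricci_consts cc a b = if a == b then c + d a else 0) ->
  is_diag_derivation cc d -> is_nilsoliton br P.
Proof.
move=> ricci_diag d_der; split=> //.
exists c, (invmx P *m diag_mx (\row_i d i) *m P); split; first exact: is_derivation_diag.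
move=> x; rewrite ricci_op_coord.
have -> : \matrix_(a, b) ricci_consts cc a b = c%:M + diag_mx (\row_i d i).
  apply/matrixP => a b; rewrite !mxE ricci_diag.
  by case: eqP => [->|_]; rewrite ?mulr1n ?mulr0n ?addr0.
by rewrite mulmxDr mulmxDl mul_mx_scalar -scalemxAl mulmxKV // !mulmxA.
Qed.

End NilsolitonCriterion.

Lemma diag_derivationZ (R : realType) n (cc : 'I_n -> 'I_n -> 'I_n -> R) d (s : R) :
  is_diag_derivation cc d -> is_diag_derivation cc (fun a => s * d a).
Proof. by move=> d_der a b k /d_der ->; rewrite mulrDr. Qed.

Section Rescaling.
Variables (R : realType) (n : nat) (C : 'I_n -> 'I_n -> 'rV[R]_n).
Variables (B : 'M[R]_n) (cn : 'I_n -> 'I_n -> 'I_n -> R) (t : 'I_n -> R).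
Hypothesis t_neq0 : forall i, t i != 0.

Definition rescale_consts (a b k : 'I_n) : R := t a * t b / t k * cn a b k.

Local Notation P := (diag_mx (\row_i t i) *m B).

Lemma row_diag_mulmx a : row a P = t a *: row a B.
Proof. by apply/rowP => j; rewrite mul_diag_mx !mxE. Qed.

Lemma unitmx_diag_mulmx : B \in unitmx -> P \in unitmx.
Proof.
move=> B_unit; rewrite unitmx_mul B_unit andbT unitmxE det_diag unitfE.
by apply/prodf_neq0 => i _; rewrite mxE t_neq0.
Qed.

Lemma structure_consts_rescale :
  is_structure_consts C B cn -> is_structure_consts C P rescale_consts.
Proof.
move=> B_consts a b; rewrite !row_diag_mulmx bracket_of_constsZ B_consts scaler_sumr.
apply: eq_bigr => k _; rewrite row_diag_mulmx !scalerA; congr (_ *: _).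
by rewrite /rescale_consts; field; apply: t_neq0.
Qed.

Lemma ricci_consts_rescale a b :
  ricci_consts rescale_consts a b =
    - (1/2) * (t a * t b)
        * (\sum_i \sum_j t i ^+ 2 / t j ^+ 2 * (cn a i j * cn b i j))
    + (1/4) / (t a * t b)
        * (\sum_i \sum_j t i ^+ 2 * t j ^+ 2 * (cn i j a * cn i j b)).
Proof.
rewrite /ricci_consts; congr (_ + _); rewrite -[RHS]mulrA; congr (_ * _).
  rewrite big_distrr; apply: eq_bigr => i _; rewrite big_distrr; apply: eq_bigr => j _.
  by rewrite /rescale_consts /=; field; rewrite !t_neq0.
rewrite mulr_sumr; apply: eq_bigr => i _; rewrite mulr_sumr; apply: eq_bigr => j _.
by rewrite /rescale_consts /=; field; rewrite !t_neq0.
Qed.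

Lemma diag_derivation_rescale d :
  is_diag_derivation cn d -> is_diag_derivation rescale_consts d.
Proof. by move=> d_der a b k; rewrite mulf_eq0 negb_or => /andP[_ /d_der]. Qed.

End Rescaling.

Ltac case_ord7 i := case: i => [[|[|[|[|[|[|[|?]]]]]]] ?] //.

Lemma big_ord7 (R : realType) (F : 'I_7 -> R) : \sum_(i < 7) F i =
  F (@Ordinal 7 0 isT) + F (@Ordinal 7 1 isT) + F (@Ordinal 7 2 isT)
  + F (@Ordinal 7 3 isT) + F (@Ordinal 7 4 isT) + F (@Ordinal 7 5 isT)
  + F (@Ordinal 7 6 isT).
Proof.
rewrite !big_ord_recl big_ord0 addr0 !addrA.
by repeat congr (_ + _); congr F; apply: val_inj.
Qed.

Lemma eq_inord7 (i : 'I_7) k : (k < 7)%N -> (i == inord k) = (i == k :> nat).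
Proof. by move=> lt_k7; rewrite -val_eqE /= inordK. Qed.

Definition n7_consts_entry (R : realType) (i j k : nat) : R :=
  match i, j, k with
  | 0, 1, 2 => 1 | 1, 0, 2 => -1
  | 0, 2, 3 => 1 | 2, 0, 3 => -1
  | 0, 3, 5 => 1 | 3, 0, 5 => -1
  | 0, 5, 6 => 1 | 5, 0, 6 => -1
  | 1, 2, 4 => 1 | 2, 1, 4 => -1
  | 1, 4, 5 => 1 | 4, 1, 5 => -1
  | 1, 5, 6 => 1 | 5, 1, 6 => -1
  | 2, 3, 6 => -1 | 3, 2, 6 => 1
  | 2, 4, 6 => 1 | 4, 2, 6 => -1
  | _, _, _ => 0 end.

Lemma n7_constsE (R : realType) (i j k : 'I_7) :
  n7_consts R i j 0 k = n7_consts_entry R i j k.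
Proof.
case_ord7 i; case_ord7 j; case_ord7 k;
  rewrite /n7_consts /= ?/ebasis ?mxE ?oppr0 ?eq_inord7 //=.
all: by rewrite ?oppr0 ?opprK.
Qed.

Definition nice_basis_entry (R : realType) (i j : nat) : R :=
  match i, j with
  | 0, 0 => 1 | 0, 1 => 1
  | 1, 0 => 1 | 1, 1 => -1
  | 2, 2 => 1
  | 3, 3 => 1 | 3, 4 => 1
  | 4, 3 => 1 | 4, 4 => -1
  | 5, 5 => 1 | 6, 6 => 1
  | _, _ => 0 end.

Definition nice_basis_inv_entry (R : realType) (i j : nat) : R :=
  match i, j with
  | 0, 0 => 1/2 | 0, 1 => 1/2
  | 1, 0 => 1/2 | 1, 1 => -(1/2)
  | 2, 2 => 1
  | 3, 3 => 1/2 | 3, 4 => 1/2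
  | 4, 3 => 1/2 | 4, 4 => -(1/2)
  | 5, 5 => 1 | 6, 6 => 1
  | _, _ => 0 end.

Definition nice_basis (R : realType) : 'M[R]_7 := \matrix_(i, j) nice_basis_entry R i j.

Lemma nice_basis_unit (R : realType) : nice_basis R \in unitmx.
Proof.
suff inv : nice_basis R *m \matrix_(i, j) nice_basis_inv_entry R i j = 1%:M.
  exact: (mulmx1_unit inv).1.
apply/matrixP => i j; rewrite !mxE big_ord7 !mxE.
case_ord7 i; case_ord7 j; rewrite -val_eqE /=;
  cbv beta iota delta [nice_basis_entry nice_basis_inv_entry nat_of_ord eqn]; by field.
Qed.

Definition nice_consts (R : realType) (a b k : nat) : R :=
  match a, b, k with
  | 0, 1, 2 => -2 | 1, 0, 2 => 2
  | 0, 2, 3 => 1 | 2, 0, 3 => -1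
  | 1, 2, 4 => 1 | 2, 1, 4 => -1
  | 0, 3, 5 => 2 | 3, 0, 5 => -2
  | 1, 4, 5 => 2 | 4, 1, 5 => -2
  | 0, 5, 6 => 2 | 5, 0, 6 => -2
  | 2, 4, 6 => -2 | 4, 2, 6 => 2
  | _, _, _ => 0 end.

Lemma nice_basis_structure_consts (R : realType) :
  is_structure_consts (n7_consts R) (nice_basis R) (fun a b k => nice_consts R a b k).
Proof.
move=> a b; apply/rowP => m; rewrite /bracket_of_consts !summxE.
under eq_bigr => i _ do (rewrite summxE; under eq_bigr => j _ do
  rewrite !mxE n7_constsE -mulrA).
under eq_bigr => i _ do rewrite -big_distrr /=.
under [RHS]eq_bigr => k _ do rewrite !mxE.
(* Fixing the first row first kills most outer terms before the inner sums expand. *)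
case_ord7 a; rewrite big_ord7 [RHS]big_ord7;
  cbv beta iota delta [nice_consts nice_basis_entry nat_of_ord];
  rewrite ?mul0r ?add0r ?addr0 ?mul1r.
all: case_ord7 b; case_ord7 m; rewrite !big_ord7;
  cbv beta iota delta [nice_consts nice_basis_entry n7_consts_entry nat_of_ord]; ring.
Qed.

Lemma nice_consts_orth_first (R : realType) (a b i j : 'I_7) :
  a != b -> nice_consts R a i j * nice_consts R b i j = 0.
Proof.
rewrite -val_eqE; case_ord7 i; case_ord7 j; case_ord7 a;
  cbv beta iota delta [nice_consts nat_of_ord]; rewrite ?mul0r //;
  by case_ord7 b; cbv beta iota delta [nat_of_ord]; rewrite ?mulr0.
Qed.

Lemma nice_consts_orth_last (R : realType) (a b i j : 'I_7) :
  a != b -> nice_consts R i j a * nice_consts R i j b = 0.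
Proof.
rewrite -val_eqE; case_ord7 i; case_ord7 j; case_ord7 a;
  cbv beta iota delta [nice_consts nat_of_ord]; rewrite ?mul0r //;
  by case_ord7 b; cbv beta iota delta [nat_of_ord]; rewrite ?mulr0.
Qed.

Definition nice_grading (R : realType) (i : nat) : R :=
  match i with 0 | 1 => 1 | 2 => 2 | 3 | 4 => 3 | 5 => 4 | _ => 5 end.

Lemma nice_consts_diag_derivation (R : realType) :
  is_diag_derivation (fun a b k : 'I_7 => nice_consts R a b k)
                     (fun a => nice_grading R a).
Proof.
move=> a b k; case_ord7 a; case_ord7 b; case_ord7 k;
  cbv beta iota delta [nice_consts nice_grading nat_of_ord]; rewrite ?eqxx // => _; lra.
Qed.

Definition n7_weight (R : realType) (i : nat) : R :=
  match i with
  | 0 => 1 | 1 => 2 | 2 => 2 | 3 => 13/10 | 4 => 13/20 | 5 => 13/10 | _ => 169/150 end.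

Definition n7_scale (R : realType) (i : 'I_7) : R := Num.sqrt (n7_weight R i).

Lemma n7_weight_gt0 (R : realType) i : 0 < n7_weight R i.
Proof.
by do 7 (case: i => [|i]; first by rewrite /n7_weight; lra); rewrite /n7_weight; lra.
Qed.

Lemma n7_scale_sqr (R : realType) i : n7_scale R i ^+ 2 = n7_weight R i.
Proof. by rewrite sqr_sqrtr // ltW // n7_weight_gt0. Qed.

Lemma n7_scale_neq0 (R : realType) i : n7_scale R i != 0.
Proof. by rewrite gt_eqF // sqrtr_gt0 n7_weight_gt0. Qed.

Lemma n7_rescaled_ricci (R : realType) (a b : 'I_7) :
  ricci_consts (rescale_consts (fun a b k : 'I_7 => nice_consts R a b k) (n7_scale R)) a b
  = if a == b then -10 + 38/13 * nice_grading R a else 0.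
Proof.
rewrite (ricci_consts_rescale _ (@n7_scale_neq0 R)).
have [<-|ne_ab] := eqVneq a b; last first.
  rewrite !big1 ?mulr0 ?addr0 // => i _; apply: big1 => j _.
    by rewrite nice_consts_orth_last // mulr0.
  by rewrite nice_consts_orth_first // mulr0.
rewrite -expr2 n7_scale_sqr.
under eq_bigr do under eq_bigr do rewrite !n7_scale_sqr.
under [in X in _ + X]eq_bigr do under eq_bigr do rewrite !n7_scale_sqr.
case_ord7 a; rewrite !big_ord7;
  cbv beta iota delta [nice_consts n7_weight nice_grading nat_of_ord]; by field.
Qed.

Theorem mainTheorem13 (R : realType) : einstein_nilradical (n7_bracket R).
Proof.
have t_neq0 := @n7_scale_neq0 R.
exists (diag_mx (\row_i n7_scale R i) *m nice_basis R).
apply: (is_nilsoliton_diag (unitmx_diag_mulmx t_neq0 (nice_basis_unit R))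
         (structure_consts_rescale t_neq0 (nice_basis_structure_consts R))
         (n7_rescaled_ricci R)).
exact/diag_derivation_rescale/diag_derivationZ/nice_consts_diag_derivation.
Qed.
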